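(* Let $\Omega\subseteq\mathbb{R}$ and let $f,g:\Omega\to\mathbb{R}$ be twice differentiable such that $f'$ and $g'$ are invertible and the inverse functions $(f')^{-1},(g')^{-1}$ are differentiable and convex. Then for any $p,q\in\Omega$ and $z\in\mathbb{R}$ with $g'(q)=f'(p)-z$: $$q\ge p+\frac{f'(p)-g'(p)-z}{g''(p)},\qquad q\le p+\frac{f'(p)-g'(p)-z}{g''(q)},$$ $$q\ge p+\frac{f'(q)-g'(q)-z}{f''(p)},\qquad q\le p+\frac{f'(q)-g'(q)-z}{f''(q)}.$$ *)

From Stdlib Require Import Reals.
From Coquelicot Require Import Coquelicot.
Open Scope R_scope.

Definition img (h : R -> R) (S : R -> Prop) (y : R) : Prop :=
  exists x, S x /\ y = h x.

Definition convex_set (S : R -> Prop) : Prop :=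
  forall x y t, S x -> S y -> 0 <= t <= 1 -> S (t * x + (1 - t) * y).

Definition convex_on (S : R -> Prop) (F : R -> R) : Prop :=
  convex_set S /\
  forall x y t, S x -> S y -> 0 <= t <= 1 ->
    F (t * x + (1 - t) * y) <= t * F x + (1 - t) * F y.

Definition twice_diff_on (S : R -> Prop) (f : R -> R) : Prop :=
  forall x, S x -> ex_derive f x /\ ex_derive (Derive f) x.

Definition inverse_on (S : R -> Prop) (h Finv : R -> R) : Prop :=
  (forall x y, S x -> S y -> h x = h y -> x = y) /\
  (forall x, S x -> Finv (h x) = x).

(* The inverse of h := f' is convex, so it lies above its tangent at h(p), whose slope is
   1/h'(p) by the chain rule; evaluating at h(q) gives q - p >= (h(q) - h(p)) / h'(p).
   The four inequalities are this fact for f' and g', with p and q in either order,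
   once f'(p) - z is replaced by g'(q). *)
From Stdlib Require Import Reals Lra.
From Coquelicot Require Import Coquelicot.
Open Scope R_scope.

Lemma is_derive_le_of_right_increments (phi : R -> R) (l c : R) :
  is_derive phi 0 l ->
  (forall t, 0 < t <= 1 -> phi t - phi 0 <= t * c) ->
  l <= c.
Proof.
  intros Hd Hinc.
  apply is_derive_Reals in Hd.
  apply Rnot_lt_le; intro Hcl.
  destruct (Hd (l - c) ltac:(lra)) as [delta Hdelta].
  pose proof (cond_pos delta) as Hdelta_pos.
  set (t := Rmin (delta / 2) 1).
  assert (Ht : 0 < t <= 1).
  { split; [apply Rmin_glb_lt; lra | apply Rmin_r]. }
  assert (Ht_delta : t < delta) by (pose proof (Rmin_l (delta / 2) 1); unfold t in *; lra).
  specialize (Hdelta t ltac:(lra) ltac:(rewrite Rabs_pos_eq; lra)).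
  rewrite Rplus_0_l in Hdelta.
  assert (Hquot : (phi t - phi 0) / t <= c).
  { apply (Rmult_le_reg_r t); [lra |].
    unfold Rdiv; rewrite Rmult_assoc, Rinv_l by lra.
    rewrite Rmult_1_r, Rmult_comm. now apply Hinc. }
  apply Rabs_def2 in Hdelta. lra.
Qed.

Lemma convex_on_tangent_le (S : R -> Prop) (F : R -> R) (x y d : R) :
  convex_on S F -> S x -> S y -> is_derive F x d ->
  d * (y - x) <= F y - F x.
Proof.
  intros [_ HF] Sx Sy Hd.
  rewrite Rmult_comm.
  apply (is_derive_le_of_right_increments (fun t => F (x + t * (y - x)))).
  - apply (is_derive_comp F (fun t => x + t * (y - x)) 0 d (y - x)).
    + now replace (x + 0 * (y - x)) with x by ring.
    + auto_derive; [exact I | ring].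
  - intros t Ht; simpl.
    replace (x + t * (y - x)) with (t * y + (1 - t) * x) by ring.
    replace (x + 0 * (y - x)) with x by ring.
    pose proof (HF y x t Sy Sx ltac:(lra)). lra.
Qed.

Lemma is_derive_inverse_mul (S : R -> Prop) (h hinv : R -> R) (a dh dhinv : R) :
  open S -> (forall x, S x -> hinv (h x) = x) -> S a ->
  is_derive h a dh -> is_derive hinv (h a) dhinv -> dhinv * dh = 1.
Proof.
  intros HS Hinv Sa Hh Hhinv.
  assert (Hid : is_derive (fun x : R => x) a (dh * dhinv)).
  { apply (is_derive_ext_loc (fun x => hinv (h x))).
    - apply (filter_imp S); [exact Hinv | exact (HS a Sa)].
    - exact (is_derive_comp hinv h a dhinv dh Hhinv Hh). }
  assert (Hone : Derive (fun x : R => x) a = 1) by exact (is_derive_unique _ _ _ (is_derive_id a)).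
  rewrite (is_derive_unique _ _ _ Hid) in Hone. lra.
Qed.

Lemma convex_inverse_tangent_ge (S : R -> Prop) (h hinv : R -> R) (a b : R) :
  open S -> (forall x, S x -> ex_derive h x) ->
  (forall x, S x -> hinv (h x) = x) ->
  (forall y, img h S y -> ex_derive hinv y) ->
  convex_on (img h S) hinv -> S a -> S b ->
  b - a >= (h b - h a) / Derive h a.
Proof.
  intros HS Hh Hinv Hhinv Hconv Sa Sb.
  assert (Ia : img h S (h a)) by (exists a; split; auto).
  assert (Ib : img h S (h b)) by (exists b; split; auto).
  pose proof (Derive_correct _ _ (Hh a Sa)) as Dh.
  pose proof (Derive_correct _ _ (Hhinv _ Ia)) as Dhinv.
  pose proof (is_derive_inverse_mul S h hinv a _ _ HS Hinv Sa Dh Dhinv) as Hone.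
  assert (Hne : Derive h a <> 0) by (intro Hz; rewrite Hz in Hone; lra).
  assert (Hslope : Derive hinv (h a) = / Derive h a).
  { apply Rmult_eq_reg_r with (Derive h a); [now rewrite Rinv_l | exact Hne]. }
  pose proof (convex_on_tangent_le _ _ _ _ _ Hconv Ia Ib Dhinv) as Htan.
  rewrite !Hinv, Hslope in Htan by assumption.
  unfold Rdiv. lra.
Qed.

Theorem lemma34 (Omega : R -> Prop) (f g Finv Ginv : R -> R)
  (HO : open Omega)
  (Hf : twice_diff_on Omega f) (Hg : twice_diff_on Omega g)
  (HFi : inverse_on Omega (Derive f) Finv)
  (HGi : inverse_on Omega (Derive g) Ginv)
  (HFd : forall y, img (Derive f) Omega y -> ex_derive Finv y)
  (HGd : forall y, img (Derive g) Omega y -> ex_derive Ginv y)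
  (HFc : convex_on (img (Derive f) Omega) Finv)
  (HGc : convex_on (img (Derive g) Omega) Ginv) :
  forall p q z : R, Omega p -> Omega q ->
    Derive g q = Derive f p - z ->
    q >= p + (Derive f p - Derive g p - z) / Derive (Derive g) p /\
    q <= p + (Derive f p - Derive g p - z) / Derive (Derive g) q /\
    q >= p + (Derive f q - Derive g q - z) / Derive (Derive f) p /\
    q <= p + (Derive f q - Derive g q - z) / Derive (Derive f) q.
Proof.
  intros p q z Op Oq Hz.
  assert (dF : forall x, Omega x -> ex_derive (Derive f) x) by (intros x Ox; apply Hf, Ox).
  assert (dG : forall x, Omega x -> ex_derive (Derive g) x) by (intros x Ox; apply Hg, Ox).
  pose proof (convex_inverse_tangent_ge _ _ _ p q HO dG (proj2 HGi) HGd HGc Op Oq) as Gpq.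
  pose proof (convex_inverse_tangent_ge _ _ _ q p HO dG (proj2 HGi) HGd HGc Oq Op) as Gqp.
  pose proof (convex_inverse_tangent_ge _ _ _ p q HO dF (proj2 HFi) HFd HFc Op Oq) as Fpq.
  pose proof (convex_inverse_tangent_ge _ _ _ q p HO dF (proj2 HFi) HFd HFc Oq Op) as Fqp.
  replace (Derive f p - Derive g p - z) with (Derive g q - Derive g p) by lra.
  replace (Derive f q - Derive g q - z) with (Derive f q - Derive f p) by lra.
  unfold Rdiv in *.
  rewrite <- (Ropp_minus_distr (Derive g q)), Ropp_mult_distr_l_reverse in Gqp.
  rewrite <- (Ropp_minus_distr (Derive f q)), Ropp_mult_distr_l_reverse in Fqp.
  lra.
Qed.
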